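(* Let $\mathbb{F}$ be a field with $\mathrm{char}(\mathbb{F})\neq 2,3$, let $I$ be an ideal of $\hat{\mathcal{H}}$ with $I\subseteq J$, and let $x$ be a non-zero element of $I$ of minimal $J$-degree, with $p$-level $3k$. Then $x=\sum_{j\in 3\mathbb{N},\,j\le 3k}\beta_jp_{\bar1,j}$ for some $\beta_j\in\mathbb{F}$.
   Context: Notation: $\mathbb{N}=\{1,2,3,\dots\}$, $3\mathbb{N}=\{3,6,9,\dots\}$; for $r\in\mathbb{Z}$, $\bar r=r+3\mathbb{Z}\in\mathbb{Z}_3$. The algebra $\hat{\mathcal{H}}$ is the commutative $\mathbb{F}$-algebra with basis $\{a_i:i\in\mathbb{Z}\}\cup\{s_j:j\in\mathbb{N}\}\cup\{p_{\bar r,k}:\bar r\in\{\bar1,\bar2\},\ k\in 3\mathbb{N}\}$, where $s_0=0$, $p_{\bar r,j}=0$ for all $\bar r$ whenever $j\notin 3\mathbb{N}$, $p_{\bar 0,j}=-p_{\bar1,j}-p_{\bar2,j}$, $z_{\bar r,j}=p_{\bar r+\bar1,j}-p_{\bar r-\bar1,j}$, and for $i,i'\in\mathbb{Z}$, $j,l\in\mathbb{N}$, $h,k\in3\mathbb{N}$, $\bar r,\bar t\in\mathbb{Z}_3$: (H1) $a_ia_{i'}=\tfrac12(a_i+a_{i'})+s_{|i-i'|}+z_{\bar\imath,|i-i'|}$; (H2) $a_is_j=-\tfrac34a_i+\tfrac38(a_{i-j}+a_{i+j})+\tfrac32 s_j-z_{\bar\imath,j}$; (H3) $a_ip_{\bar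 r,k}=\tfrac32p_{\bar r,k}-p_{-(\bar\imath+\bar r),k}$; (H4) $s_js_l=\tfrac34(s_j+s_l)-\tfrac38(s_{|j-l|}+s_{j+l})$; (H5) $s_jp_{\bar r,k}=\tfrac34(p_{\bar r,j}+p_{\bar r,k})-\tfrac38(p_{\bar r,|j-k|}+p_{\bar r,j+k})$; (H6) $p_{\bar r,h}p_{\bar t,k}=\tfrac14(z_{-(\bar r+\bar t),h}+z_{-(\bar r+\bar t),k})-\tfrac18(z_{-(\bar r+\bar t),|h-k|}+z_{-(\bar r+\bar t),h+k})$. $J=\langle p_{\bar1,j},p_{\bar2,j}:j\in3\mathbb{N}\rangle$ (an ideal). Every non-zero $x\in J$ is uniquely $x=\sum_{j\in3\mathbb{N},\,j\le 3m}\sum_{\bar r\in\{\bar1,\bar2\}}\beta_{\bar r,j}p_{\bar r,j}$ with $\beta_{\bar r,3m}\neq0$ for some $\bar r$; its $p$-level is $3m$ and its $J$-degree is $3m+\sum_{r\in\{1,2\},\ \beta_{\bar r,3m}\neq0}\tfrac r4$. *)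

From HB Require Import structures.
From mathcomp Require Import all_boot all_order all_algebra.
From mathcomp Require Import finmap monalg.
Set Implicit Arguments. Unset Strict Implicit. Unset Printing Implicit Defensive.
Import Order.TTheory GRing.Theory Num.Theory.
Local Open Scope ring_scope.

(* Index set of the basis of \hat H:
   inl i                 ~ a_i          (i : int)
   inr (inl n)           ~ s_(n+1)      (j = n+1 in N = {1,2,...})
   inr (inr (false, m))  ~ p_(1bar, 3(m+1))
   inr (inr (true,  m))  ~ p_(2bar, 3(m+1)) *)
Definition Bas : Type := (int + (nat + (bool * nat)))%type.

Definition Hh (F : fieldType) := {malg F[Bas]}.

Section Hhat.
Variable F : fieldType.
Local Notation H := (Hh F).

Definition ea (i : int) : H := << (inl i : Bas) >>.
Definition es (j : nat) : H :=
  if j is n.+1 then << (inr (inl n) : Bas) >> else 0.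
(* p_{rbar,k} for rbar in {1bar (b=false), 2bar (b=true)}; zero unless k in 3N *)
Definition pb (b : bool) (k : nat) : H :=
  if (k %% 3 == 0)%N && (0 < k)%N then << (inr (inr (b, (k %/ 3).-1)) : Bas) >>
  else 0.
(* p_{rbar,k} for an arbitrary residue rbar = r + 3Z, with p_{0bar} = -p_1 - p_2 *)
Definition ep (r : int) (k : nat) : H :=
  let c := (r %% 3)%Z in
  if c == 1 then pb false k else if c == 2 then pb true k
  else - pb false k - pb true k.
Definition ez (r : int) (j : nat) : H := ep (r + 1) j - ep (r - 1) j.

Definition rint (b : bool) : int := if b then 2 else 1.

Definition q (n d : nat) : F := n%:R / d%:R.

(* products of basis elements, (H1)-(H6) *)
Definition mulAS (i : int) (j : nat) : H :=
  - (q 3 4 *: ea i) + q 3 8 *: (ea (i - j%:Z) + ea (i + j%:Z))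
  + q 3 2 *: es j - ez i j.
Definition mulAP (i : int) (r : int) (k : nat) : H :=
  q 3 2 *: ep r k - ep (- (i + r)) k.
Definition mulSP (j : nat) (r : int) (k : nat) : H :=
  q 3 4 *: (ep r j + ep r k) - q 3 8 *: (ep r `|j%:Z - k%:Z|%N + ep r (j + k)).

Definition mulB (b c : Bas) : H :=
  match b, c with
  | inl i, inl i' =>
      q 1 2 *: (ea i + ea i') + es `|i - i'|%N + ez i `|i - i'|%N
  | inl i, inr (inl n) | inr (inl n), inl i => mulAS i n.+1
  | inl i, inr (inr (bb, m)) | inr (inr (bb, m)), inl i =>
      mulAP i (rint bb) (3 * m.+1)
  | inr (inl n), inr (inl n') =>
      let j := n.+1 in let l := n'.+1 in
      q 3 4 *: (es j + es l) - q 3 8 *: (es `|j%:Z - l%:Z|%N + es (j + l))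
  | inr (inl n), inr (inr (bb, m)) | inr (inr (bb, m)), inr (inl n) =>
      mulSP n.+1 (rint bb) (3 * m.+1)
  | inr (inr (bb, m)), inr (inr (bb', m')) =>
      let h := (3 * m.+1)%N in let k := (3 * m'.+1)%N in
      let rt := - (rint bb + rint bb') in
      q 1 4 *: (ez rt h + ez rt k)
      - q 1 8 *: (ez rt `|h%:Z - k%:Z|%N + ez rt (h + k))
  end.

Definition hmul (x y : H) : H :=
  \sum_(b <- msupp x) \sum_(c <- msupp y) (x@_b * y@_c) *: mulB b c.

Definition is_ideal (I : H -> Prop) : Prop :=
  [/\ I 0,
      forall x y, I x -> I y -> I (x + y),
      forall (c : F) x, I x -> I (c *: x) &
      forall h x, I x -> I (hmul h x)].

Definition isP (b : Bas) : bool := if b is inr (inr _) then true else false.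

Definition inJ (x : H) : Prop := forall b, b \in msupp x -> isP b.

Definition pidx (b : Bas) : nat := if b is inr (inr (_, m)) then m.+1 else 0%N.

Definition ptop (x : H) : nat := \max_(b <- msupp x) pidx b.
Definition plevel (x : H) : nat := (3 * ptop x)%N.

Definition jdeg (x : H) : rat :=
  (plevel x)%:R
  + (if x@_(inr (inr (false, (ptop x).-1)) : Bas) != 0 then 1%:R / 4%:R else 0)
  + (if x@_(inr (inr (true, (ptop x).-1)) : Bas) != 0 then 2%:R / 4%:R else 0).

End Hhat.

From HB Require Import structures.
From mathcomp Require Import all_boot all_order all_algebra.
From mathcomp Require Import finmap monalg ring lra zify.
Set Implicit Arguments. Unset Strict Implicit. Unset Printing Implicit Defensive.
Import Order.TTheory GRing.Theory Num.Theory.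
Local Open Scope ring_scope.

(* By (H3), multiplication by a_i preserves every level 3(m+1) of J, acting on
   the coordinates (beta_1, beta_2) there by a 2x2 matrix.  For i = 1, 2 these are
   [[1/2, 1], [0, 5/2]] and [[5/2, 0], [1, 1/2]], so (a_2 - 1)(2 a_1 - 1) sends
   (beta_1, beta_2) to (3 beta_2, 0) on each level.  Applied to x it gives an
   element w of I, nonzero as soon as x has a p_2-term (char F <> 3), whose top
   level 3m is the highest level carrying a p_2-term of x; so jdeg w = 3m + 1/4
   while jdeg x >= 3m + 1/2, against the minimality of x. *)

Lemma sum_msupp_delta (K : choiceType) (R : ringType) (y : {malg R[K]}) d (a : R) :
  \sum_(c <- msupp y) y@_c * ((c == d)%:R * a) = y@_d * a.
Proof.
have [yd|dy] := boolP (d \in msupp y).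
  rewrite (bigD1_seq d) ?fset_uniq //= eqxx mul1r big1 ?addr0 // => c /negbTE ->.
  by rewrite mul0r mulr0.
rewrite (mcoeff_outdom dy) mul0r big1_seq // => c cy.
by rewrite (_ : c == d = false) ?mul0r ?mulr0 //; apply: contraNF dy => /eqP <-.
Qed.

Section IdealJ.
Variable F : fieldType.
Implicit Types (x y w : Hh F) (b : bool) (m : nat).

Definition pkey b m : Bas := inr (inr (b, m)).

Lemma pkey_eq b m b' m' : (pkey b m == pkey b' m') = (b == b') && (m == m').
Proof. by apply/eqP/andP => [[-> ->]|[/eqP -> /eqP ->]]. Qed.

Lemma isP_pkey (c : Bas) : isP c -> exists b m, c = pkey b m.
Proof. by case: c => [//|[//|[b m]]] _; exists b, m. Qed.

Lemma pbE b m : pb F b (3 * m.+1) = << pkey b m >>.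
Proof.
rewrite /pb (_ : (_ && _) = true); last by apply/andP; split; lia.
by rewrite (_ : ((3 * m.+1) %/ 3).-1 = m) //; lia.
Qed.

Lemma mcoeff_pb b k b' m :
  (pb F b k)@_(pkey b' m) = ((b == b') && (k == 3 * m.+1)%N)%:R.
Proof.
rewrite /pb; case: ifP => [/andP [k3 k0] | nk].
  rewrite mcoeffU pkey_eq; congr (_ && _)%:R; apply/eqP/eqP; lia.
rewrite mcoeff0 (_ : (k == 3 * m.+1)%N = false) ?andbF //.
by apply: contraFF nk => /eqP ->; apply/andP; split; lia.
Qed.

Lemma pb_nonP b k d : ~~ isP d -> (pb F b k)@_d = 0.
Proof.
by move=> nd; rewrite /pb; case: (_ && _); rewrite ?mcoeff0 // mcoeffU; case: d nd => [?|[?|?]].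
Qed.

(* [p_r = ep_coef r false p_1 + ep_coef r true p_2] on every level. *)
Definition ep_coef (r : int) b : F :=
  if (r %% 3)%Z == 1 then (~~ b)%:R else if (r %% 3)%Z == 2 then b%:R else -1.

Lemma mcoeff_epE (r : int) k d : (ep F r k)@_d =
  ep_coef r false * (pb F false k)@_d + ep_coef r true * (pb F true k)@_d.
Proof.
(* Generalizing the two p-terms keeps rewrites from comparing [pb F false k]
   with [pb F true k], which unfolds finitely supported functions and is very
   slow; the same device is used below. *)
suff ep_coefE (p1 p2 : Hh F) :
    (if (r %% 3)%Z == 1 then p1 else if (r %% 3)%Z == 2 then p2 else - p1 - p2)@_d
    = ep_coef r false * p1@_d + ep_coef r true * p2@_d by exact: ep_coefE.
rewrite /ep_coef; case: eqP => _; [|case: eqP => _];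
  by rewrite /= ?mcoeffB ?mcoeffN ?mul1r ?mul0r ?addr0 ?add0r ?mulN1r.
Qed.

Lemma mcoeff_ep (r : int) k b m :
  (ep F r k)@_(pkey b m) = (k == 3 * m.+1)%N%:R * ep_coef r b.
Proof.
suff combine (c1 c2 : F) : c1 = ((false == b) && (k == 3 * m.+1)%N)%:R ->
    c2 = ((true == b) && (k == 3 * m.+1)%N)%:R ->
    ep_coef r false * c1 + ep_coef r true * c2 = (k == 3 * m.+1)%N%:R * ep_coef r b.
  by rewrite mcoeff_epE; apply: combine; apply: mcoeff_pb.
by move=> -> ->; case: b; case: (k == _); rewrite /= ?mulr1 ?mulr0 ?mul1r ?mul0r ?addr0 ?add0r.
Qed.

Lemma ep_coef_rint b b' : ep_coef (rint b) b' = (b == b')%:R.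
Proof. by case: b; case: b'. Qed.

Lemma mcoeff_ep_nonP (r : int) k d : ~~ isP d -> (ep F r k)@_d = 0.
Proof.
move=> nd; suff combine (c1 c2 : F) : c1 = 0 -> c2 = 0 ->
    ep_coef r false * c1 + ep_coef r true * c2 = 0.
  by rewrite mcoeff_epE; apply: combine; apply: pb_nonP.
by move=> -> ->; rewrite !mulr0 addr0.
Qed.

Lemma inJP y : inJ y <-> (forall c, ~~ isP c -> y@_c = 0).
Proof.
split=> [yJ c nc | y0 c].
  by apply/eqP; rewrite mcoeff_eq0; apply: contra nc; apply: yJ.
by rewrite -mcoeff_neq0; apply: contraR => /y0 ->; rewrite eqxx.
Qed.

(* [a_i p_b = ea_p_coef i b false p_1 + ea_p_coef i b true p_2] on every
   level, by (H3). *)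
Definition ea_p_coef (i : int) b b' : F :=
  q F 3 2 * (b == b')%:R - ep_coef (- (i + rint b)) b'.

Lemma mcoeff_mulB_ea_p (i : int) b b' m m' :
  (mulB F (inl i) (pkey b m))@_(pkey b' m') = (m == m')%:R * ea_p_coef i b b'.
Proof.
rewrite /= /mulAP /ea_p_coef mcoeffB mcoeffZ !mcoeff_ep ep_coef_rint.
by rewrite eqn_pmul2l // eqSS mulrBr mulrCA.
Qed.

Lemma ea1_p_coef : [/\ ea_p_coef 1 false false = q F 3 2 - 1,
  ea_p_coef 1 true false = 1, ea_p_coef 1 false true = 0
  & ea_p_coef 1 true true = q F 3 2 + 1].
Proof. by rewrite /ea_p_coef /ep_coef /=; split; ring. Qed.

Lemma ea2_p_coef : [/\ ea_p_coef 2 false false = q F 3 2 + 1,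
  ea_p_coef 2 true false = 0, ea_p_coef 2 false true = 1
  & ea_p_coef 2 true true = q F 3 2 - 1].
Proof. by rewrite /ea_p_coef /ep_coef /=; split; ring. Qed.

Lemma mcoeff_hmul_ea (i : int) y d :
  (hmul (ea F i) y)@_d = \sum_(c <- msupp y) y@_c * (mulB F (inl i) c)@_d.
Proof.
rewrite /hmul /ea msuppU oner_eq0 big_seq_fset1 mcoeffUU raddf_sum /=.
by apply: eq_bigr => c _; rewrite mcoeffZ mul1r.
Qed.

Lemma inJ_hmul_ea (i : int) y : inJ y -> inJ (hmul (ea F i) y).
Proof.
move=> yJ; apply/inJP => d nd.
rewrite mcoeff_hmul_ea big1_seq // => c /andP[_ /yJ /isP_pkey [b [m ->]]].
by rewrite /= /mulAP mcoeffB mcoeffZ !mcoeff_ep_nonP // mulr0 subr0 mulr0.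
Qed.

Lemma mcoeff_hmul_ea_p (i : int) y b' m : inJ y ->
  (hmul (ea F i) y)@_(pkey b' m) =
  y@_(pkey false m) * ea_p_coef i false b' + y@_(pkey true m) * ea_p_coef i true b'.
Proof.
move=> yJ; rewrite mcoeff_hmul_ea (eq_big_seq (fun c =>
    y@_c * ((c == pkey false m)%:R * ea_p_coef i false b') +
    y@_c * ((c == pkey true m)%:R * ea_p_coef i true b'))).
  by rewrite big_split /= !sum_msupp_delta.
move=> c /yJ /isP_pkey [b [m0 ->]].
rewrite mcoeff_mulB_ea_p !pkey_eq -mulrDr; congr (_ * _).
by case: b; rewrite /= ?mul0r ?addr0 ?add0r.
Qed.

Definition p2_to_p1 x : Hh F :=
  let u := 2%:R *: hmul (ea F 1) x - x in hmul (ea F 2) u - u.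

Lemma mcoeff_p2_to_p1 x m : 2%:R != 0 :> F -> inJ x ->
  (p2_to_p1 x)@_(pkey false m) = 3%:R * x@_(pkey true m) /\
  (p2_to_p1 x)@_(pkey true m) = 0.
Proof.
move=> h2 xJ; have uJ : inJ (2%:R *: hmul (ea F 1) x - x).
  move: (inJ_hmul_ea (i := 1) xJ) (xJ); rewrite !inJP => vJ xJ' c nc.
  by rewrite mcoeffB mcoeffZ vJ ?xJ' // mulr0 subr0.
have [c11 c21 c12 c22] := ea1_p_coef; have [d11 d21 d12 d22] := ea2_p_coef.
rewrite /p2_to_p1 !mcoeffB !mcoeff_hmul_ea_p // !mcoeffB !mcoeffZ !mcoeff_hmul_ea_p //.
by rewrite c11 c21 c12 c22 d11 d21 d12 d22 /q; split; field.
Qed.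

Lemma ptop_gt y b m : y@_(pkey b m) != 0 -> (m < ptop y)%N.
Proof. by rewrite mcoeff_neq0 => ym; apply: (leq_bigmax_seq (pkey b m)). Qed.

Lemma ptop_attained y : y != 0 -> exists2 c, c \in msupp y & pidx c = ptop y.
Proof.
move=> y0; have : (0 < #|{: msupp y}|)%N.
  rewrite -cardfE cardfs_gt0; apply: contra y0 => /eqP y0.
  by rewrite (monalgE y) y0 big_nil.
move=> /(bigop.eq_bigmax (fun c : msupp y => pidx (val c))) [c cmax].
by exists (val c); [exact: valP | rewrite /ptop big_seq_fsetE /= cmax].
Qed.

Lemma jdeg_ge_plevel y : (plevel y)%:R <= jdeg y.
Proof. by rewrite /jdeg; do 2 case: ifP => _; lra. Qed.

Lemma jdeg_ge_p2 y m : y@_(pkey true m) != 0 -> (3 * m.+1)%:R + 2%:R / 4%:R <= jdeg y.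
Proof.
move=> ym; have := ptop_gt ym; rewrite leq_eqVlt => /predU1P [top | lt_top].
  by rewrite /jdeg /plevel -top /= ym; case: ifP => _; lra.
have : (3 * m.+1 + 3 <= plevel y)%N by rewrite /plevel; lia.
by rewrite -(ler_nat rat) natrD => le_top; have := jdeg_ge_plevel y; lra.
Qed.

Lemma jdeg_p1_top y : y@_(pkey false (ptop y).-1) != 0 ->
  y@_(pkey true (ptop y).-1) = 0 -> jdeg y = (plevel y)%:R + 1%:R / 4%:R.
Proof. by move=> yF yT; rewrite /jdeg yF yT eqxx /= addr0. Qed.

Lemma jdeg_p1_lt_p2_levels x w : inJ w -> w != 0 -> (forall m, w@_(pkey true m) = 0) ->
  (forall m, w@_(pkey false m) != 0 -> x@_(pkey true m) != 0) -> jdeg w < jdeg x.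
Proof.
move=> wJ w0 wT wx; have [c cw top] := ptop_attained w0.
have [b [m cE]] := isP_pkey (wJ _ cw); rewrite {c}cE /= in cw top.
have wF : w@_(pkey false m) != 0.
  by case: b cw => cw; rewrite mcoeff_neq0 //; rewrite -mcoeff_neq0 wT eqxx in cw.
have -> : jdeg w = (plevel w)%:R + 1%:R / 4%:R.
  by apply: jdeg_p1_top; rewrite -top /= ?wT.
by rewrite /plevel -top; have := jdeg_ge_p2 (wx _ wF); lra.
Qed.

Lemma inJ_p1_sum x : inJ x -> (forall m, x@_(pkey true m) = 0) ->
  x = \sum_(1 <= j < (ptop x).+1) x@_(pkey false j.-1) *: ep F 1 (3 * j).
Proof.
move=> xJ xT; apply/malgP => d; rewrite raddf_sum /= big_add1 /=.
under eq_bigr => j _ do rewrite /ep /= pbE mcoeffZ mcoeffU.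
have [/isP_pkey [b [m ->]] | nd] := boolP (isP d); last first.
  rewrite (proj1 (inJP x) xJ d nd) big1 // => j _.
  by case: d nd => [?|[?|?]]; rewrite //= mulr0.
under eq_bigr => j _ do rewrite pkey_eq /=.
case: b; first by rewrite xT big1 // => j _; rewrite mulr0.
have [lt_top | ge_top] := ltnP m (ptop x).
  rewrite (bigD1_seq m) ?mem_index_iota ?iota_uniq //= eqxx mulr1.
  by rewrite big1 ?addr0 // => j /negbTE ->; rewrite mulr0.
have x0 : x@_(pkey false m) = 0.
  by apply/eqP; apply: contraTT ge_top => /ptop_gt; rewrite -ltnNge.
rewrite x0 big1_seq // => j /andP[_]; rewrite mem_index_iota => jr.
by rewrite (_ : j == m = false) ?mulr0 //; apply/negbTE; rewrite neq_ltn; lia.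
Qed.

End IdealJ.

Theorem lemma7p4 (F : fieldType)
  (hchar : (2 \notin [pchar F])%N && (3 \notin [pchar F])%N)
  (I : Hh F -> Prop) (hI : is_ideal I) (hIJ : forall y, I y -> inJ y)
  (x : Hh F) (hx : I x) (hx0 : x != 0)
  (hmin : forall y, I y -> y != 0 -> jdeg x <= jdeg y)
  (k : nat) (hk : plevel x = (3 * k)%N) :
  exists beta : nat -> F,
    x = \sum_(1 <= j < k.+1) beta j *: @ep F 1 (3 * j)%N.
Proof.
have [h2 h3] : (2%:R != 0 :> F) /\ (3%:R != 0 :> F).
  by move: hchar; rewrite !inE /= => /andP [] /negbTE -> /negbTE ->.
have xJ := hIJ _ hx.
have Iw : I (p2_to_p1 x).
  case: hI => _ IA IZ IM; have IB y z : I y -> I z -> I (y - z).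
    by move=> Iy Iz; rewrite -scaleN1r; apply: IA Iy (IZ _ _ Iz).
  have Iu : I (2%:R *: hmul (ea F 1) x - x) by apply: IB => //; apply/IZ/IM.
  by apply: IB => //; apply: IM.
have wT m : (p2_to_p1 x)@_(pkey true m) = 0 by case: (mcoeff_p2_to_p1 m h2 xJ).
have wF m : (p2_to_p1 x)@_(pkey false m) = 3%:R * x@_(pkey true m).
  by case: (mcoeff_p2_to_p1 m h2 xJ).
have xT m : x@_(pkey true m) = 0.
  apply/eqP/contraT => xTm; have w0 : p2_to_p1 x != 0.
    by apply: contraNneq (mulf_neq0 h3 xTm) => w0; rewrite -wF w0 mcoeff0.
  have wx m' : (p2_to_p1 x)@_(pkey false m') != 0 -> x@_(pkey true m') != 0.
    by rewrite wF mulf_eq0 negb_or => /andP[].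
  by have := hmin _ Iw w0; rewrite leNgt (jdeg_p1_lt_p2_levels (hIJ _ Iw) w0 wT wx).
exists (fun j => x@_(pkey false j.-1)).
have -> : k = ptop x by move: hk; rewrite /plevel; lia.
exact: inJ_p1_sum.
Qed.
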